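(* Let $\sigma=\sigma_1\cdots\sigma_k$ be a planar rooted forest (decorated or not) with connected components $\sigma_j=B^+(\tau_j)$, $j=1,\dots,k$, listed from left to right. Then $$\sigma!=|\sigma_1|\cdot|\sigma_1\sigma_2|\cdots|\sigma_1\cdots\sigma_k|\cdot\tau_1!\cdots\tau_k!,$$ where $|\cdot|$ is the number of vertices and $!$ is the planar factorial.
   Context: Planar rooted forests: finite left-to-right ordered sequences of planar rooted trees; $B^+(\tau)$ is the tree obtained by grafting the trees of the planar forest $\tau$, in order, onto a new common root. On vertices, $v<w$ iff $v\neq w$ and $v$ lies on the path from a root to $w$; $\ll$ is the transitive closure of the relation $R$: $vRw$ iff $v<w$, or $v,w$ are children of a common vertex with $v$ to the right of $w$, or $v,w$ are both roots with $v$ to the right of $w$. For a finite poset $P$ and $s<t$, $\Omega^{st}_P=\{(t_v)\in[s,t]^P: t_v\ge t_w \text{ if } v<w\}$ and $P!$ is defined by $\mathrm{Vol}(\Omega^{st}_P)=(t-s)^{|P|}/P!$. The planar factorial is $\sigma!:=(V(\sigma),\ll)!$, with $\emptyset!=1$. *)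

From Stdlib Require Import Reals List Arith Relations.
Import ListNotations.
Open Scope R_scope.

(* A finite poset is given by its size n and a strict order [lt] on the
   indices 0..n-1.  A point of Omega_P^{01} is a family (x_v)_v in [0,1]^P with
   x_v >= x_w whenever v < w.  Lattice points at mesh 1/M: lists x of length n
   with entries in {0..M} satisfying the same inequalities. *)
Definition order_points (n : nat) (lt : nat -> nat -> Prop) (M : nat)
  (x : list nat) : Prop :=
  length x = n /\ Forall (fun a => (a <= M)%nat) x /\
  (forall i j, (i < n)%nat -> (j < n)%nat -> lt i j -> (nth j x 0 <= nth i x 0)%nat).

Definition is_card {A : Type} (P : A -> Prop) (c : nat) : Prop :=
  exists l : list A, NoDup l /\ (forall x, In x l <-> P x) /\ length l = c.

(* Volume (Jordan content) of Omega_P^{01} = [0,1]-order polytope: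
   limit of (#lattice points of mesh 1/M) / M^n. *)
Definition order_volume (n : nat) (lt : nat -> nat -> Prop) (v : R) : Prop :=
  exists c : nat -> nat,
    (forall M, is_card (order_points n lt M) (c M)) /\
    Un_cv (fun N => INR (c (S N)) / INR (S N) ^ n) v.

(* P! is defined by Vol(Omega_P^{st}) = (t-s)^|P| / P!; with s=0,t=1. *)
Definition poset_fact (n : nat) (lt : nat -> nat -> Prop) (f : R) : Prop :=
  exists v, order_volume n lt v /\ v <> 0 /\ f = / v.

Inductive ptree : Type := Node : list ptree -> ptree.
(* B^+(tau) = Node tau ; a planar forest is a list ptree (left to right). *)

(* Vertices are addresses: a vertex of a forest is [i; c1; ...; cm] meaning
   the i-th tree, then its c1-th child, etc. (indices from the left). *)
Fixpoint tvert (t : ptree) : list (list nat) :=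
  match t with
  | Node ts =>
      nil :: (fix fv (i : nat) (l : list ptree) : list (list nat) :=
                match l with
                | nil => nil
                | c :: cs => map (cons i) (tvert c) ++ fv (S i) cs
                end) 0%nat ts
  end.

Fixpoint fvaux (i : nat) (l : list ptree) : list (list nat) :=
  match l with
  | nil => nil
  | c :: cs => map (cons i) (tvert c) ++ fvaux (S i) cs
  end.

Definition fverts (sigma : list ptree) : list (list nat) := fvaux 0 sigma.

Definition fsize (sigma : list ptree) : nat := length (fverts sigma).

(* The relation R: v < w (v a proper ancestor of w: a proper prefix), or
   v, w siblings (children of a common vertex, or both roots) with v to the
   right of w. *)
Definition Rrel (v w : list nat) : Prop :=
  (exists u, u <> nil /\ w = v ++ u) \/
  (exists p a b, v = p ++ [a] /\ w = p ++ [b] /\ (b < a)%nat).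

Definition llrel (sigma : list ptree) : list nat -> list nat -> Prop :=
  clos_trans (list nat)
    (fun v w => In v (fverts sigma) /\ In w (fverts sigma) /\ Rrel v w).

Definition forest_lt (sigma : list ptree) (i j : nat) : Prop :=
  llrel sigma (nth i (fverts sigma) nil) (nth j (fverts sigma) nil).

Definition planar_fact (sigma : list ptree) (f : R) : Prop :=
  poset_fact (fsize sigma) (forest_lt sigma) f.

(* Let sigma = sigma_1 ... sigma_k with sigma_k = B+(tau_k) and rho = sigma_1 ... sigma_(k-1).
   The root r of sigma_k is the <<-minimum of V(sigma): it lies to the right of every other
   root and below all of its descendants, and no R-step ends at r.  Apart from r, the relation
   << never links a vertex of rho with one of tau_k.  Hence (V(sigma), <<) is obtained from the
   disjoint union of (V(rho), <<) and (V(tau_k), <<) by adjoining a minimum.  For such a poset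
   the polytope Omega^01 fibres over the value m of the minimum into Omega^0m of both parts, so
   its volume is v1 v2 \int_0^1 m^(|sigma|-1) dm = v1 v2 / |sigma|; on lattice points this is
   the count sum_(m <= M) c1(m) c2(m), whose normalised limit follows from Cesaro's lemma.
   Thus sigma! = |sigma| rho! tau_k!, and induction on k gives the formula. *)

From Stdlib Require Import Reals List Relations Lra Lia.
Import ListNotations.

Open Scope nat_scope.

(** * Counting glued lists *)

Lemma is_card_ext {A : Type} (P Q : A -> Prop) (c : nat) :
  (forall x, P x <-> Q x) -> is_card P c -> is_card Q c.
Proof.
  intros HPQ [l [Hnd [Hl Hc]]]; exists l; split; [|split]; auto.
  intro x; rewrite Hl; apply HPQ.
Qed.

Lemma is_card_disjoint_union {A : Type} (P Q : A -> Prop) (a b : nat) :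
  (forall x, P x -> Q x -> False) -> is_card P a -> is_card Q b ->
  is_card (fun x => P x \/ Q x) (a + b).
Proof.
  intros Hdisj [l1 [Hnd1 [Hl1 Hc1]]] [l2 [Hnd2 [Hl2 Hc2]]].
  exists (l1 ++ l2); split; [|split].
  - apply NoDup_app; auto; intros x H1 H2; apply (Hdisj x); [apply Hl1|apply Hl2]; auto.
  - intro x; rewrite in_app_iff, Hl1, Hl2; tauto.
  - rewrite length_app; lia.
Qed.

Lemma app_inv_length {A : Type} (x1 y1 l l' : list A) :
  length x1 = length y1 -> x1 ++ l = y1 ++ l' -> x1 = y1 /\ l = l'.
Proof.
  revert y1; induction x1 as [|a x1 IH]; intros [|b y1] Hlen Heq; try discriminate; auto.
  injection Heq as -> Heq; destruct (IH y1 ltac:(simpl in Hlen; lia) Heq) as [-> ->]; auto.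
Qed.

Lemma is_card_glue {A : Type} (P1 P2 : list A -> Prop) (m : A) (n1 a b : nat) :
  (forall x, P1 x -> length x = n1) -> is_card P1 a -> is_card P2 b ->
  is_card (fun x => exists x1 x2, x = x1 ++ m :: x2 /\ P1 x1 /\ P2 x2) (a * b).
Proof.
  intros Hlen [l1 [Hnd1 [Hl1 Hc1]]] [l2 [Hnd2 [Hl2 Hc2]]].
  set (glue x1 x2 := x1 ++ m :: x2).
  exists (flat_map (fun x1 => map (glue x1) l2) l1); split; [|split].
  - assert (Hlen1 : forall x, In x l1 -> length x = n1) by (intros x Hx; apply Hlen, Hl1, Hx).
    clear Hl1 Hc1; induction l1 as [|x1 l1 IH]; simpl; [constructor|].
    apply NoDup_cons_iff in Hnd1 as [Hx1 Hnd1].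
    apply NoDup_app.
    + apply NoDup_map_NoDup_ForallPairs; auto.
      intros y y' _ _ Hyy'; apply app_inv_head in Hyy'; now injection Hyy'.
    + apply IH; auto; intros x Hx; apply Hlen1; now right.
    + intros z Hz Hz'; apply in_map_iff in Hz as [x2 [<- _]].
      apply in_flat_map in Hz' as [y1 [Hy1 Hz']]; apply in_map_iff in Hz' as [y2 [Heq _]].
      destruct (app_inv_length y1 x1 _ _ ltac:(rewrite !Hlen1; simpl; auto) Heq) as [-> _].
      contradiction.
  - intro z; rewrite in_flat_map; split.
    + intros [x1 [Hx1 Hz]]; apply in_map_iff in Hz as [x2 [<- Hx2]].
      exists x1, x2; rewrite <- Hl1, <- Hl2; auto.
    + intros [x1 [x2 [-> [H1 H2]]]]; exists x1; split; [now apply Hl1|].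
      apply in_map_iff; exists x2; split; [reflexivity|now apply Hl2].
  - rewrite (flat_map_constant_length (c := b)); [lia|].
    intros x _; now rewrite length_map.
Qed.

Lemma is_card_glue_upto (P1 P2 : nat -> list nat -> Prop) (n1 : nat) (c1 c2 : nat -> nat)
    (M : nat) :
  (forall m x, P1 m x -> length x = n1) ->
  (forall m, is_card (P1 m) (c1 m)) -> (forall m, is_card (P2 m) (c2 m)) ->
  is_card (fun x => exists m x1 x2, x = x1 ++ m :: x2 /\ m <= M /\ P1 m x1 /\ P2 m x2)
    (sum_nat_f_O (fun m => c1 m * c2 m) M).
Proof.
  intros Hlen Hc1 Hc2; induction M as [|M IH]; simpl.
  - refine (is_card_ext _ _ _ _ (is_card_glue (P1 0) (P2 0) 0 n1 _ _ (Hlen 0) (Hc1 0) (Hc2 0))).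
    intro x; split.
    + intros [x1 [x2 H]]; exists 0%nat, x1, x2; intuition.
    + intros [m [x1 [x2 [Hx [Hm H]]]]]; replace m with 0%nat in * by lia; eauto.
  - refine (is_card_ext _ _ _ _ (is_card_disjoint_union _ _ _ _ _ IH
              (is_card_glue (P1 (S M)) (P2 (S M)) (S M) n1 _ _ (Hlen (S M)) (Hc1 _) (Hc2 _)))).
    + intro x; split.
      * intros [[m [x1 [x2 [Hx [Hm H]]]]]|[x1 [x2 H]]];
          [exists m, x1, x2|exists (S M), x1, x2]; intuition.
      * intros [m [x1 [x2 [Hx [Hm H]]]]]; destruct (Nat.eq_dec m (S M)) as [->|Hne].
        -- right; eauto.
        -- left; exists m, x1, x2; intuition lia.
    + intros x [m [x1 [x2 [-> [Hm [H1 _]]]]]] [y1 [y2 [Heq [H1' _]]]].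
      assert (Hlen1 : length x1 = length y1) by now rewrite (Hlen _ _ H1), (Hlen _ _ H1').
      destruct (app_inv_length x1 y1 _ _ Hlen1 Heq) as [_ Hm'].
      injection Hm'; lia.
Qed.

Open Scope R_scope.

(** * A weighted Cesaro limit *)

Lemma Un_cv_const (c : R) : Un_cv (fun _ => c) c.
Proof.
  intros eps Heps; exists 0%nat; intros n _.
  unfold R_dist; rewrite Rminus_diag, Rabs_R0; lra.
Qed.

Lemma Un_cv_squeeze (u v w : nat -> R) (l : R) :
  (forall n, u n <= v n <= w n) -> Un_cv u l -> Un_cv w l -> Un_cv v l.
Proof.
  intros Huvw Hu Hw eps Heps.
  destruct (Hu eps Heps) as [N1 HN1], (Hw eps Heps) as [N2 HN2].
  exists (Nat.max N1 N2); intros n Hn; unfold R_dist in *.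
  specialize (HN1 n ltac:(lia)); specialize (HN2 n ltac:(lia)); specialize (Huvw n).
  apply Rabs_def2 in HN1, HN2; apply Rabs_def1; lra.
Qed.

Lemma cv_infty_ge_INR (u : nat -> R) : (forall n, INR n <= u n) -> cv_infty u.
Proof.
  intros Hu M; destruct (INR_archimed 1 M Rlt_0_1) as [N HN].
  exists N; intros n Hn; specialize (Hu n); apply le_INR in Hn; lra.
Qed.

Lemma pow_succ_diff_bounds (y : R) (q : nat) : 0 <= y ->
  INR (S q) * y ^ q <= (y + 1) ^ S q - y ^ S q <= INR (S q) * (y + 1) ^ q.
Proof.
  intro Hy; induction q as [|q [IHl IHu]]; [simpl; lra|].
  assert (Hyq : 0 <= y ^ q) by (apply pow_le; lra).
  assert (Hyq1 : y ^ S q <= (y + 1) ^ S q) by (apply pow_incr; lra).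
  assert (HSq : 0 <= INR (S q)) by apply pos_INR.
  replace ((y + 1) ^ S (S q) - y ^ S (S q))
    with ((y + 1) * ((y + 1) ^ S q - y ^ S q) + y ^ S q) by (simpl; ring).
  rewrite S_INR; simpl pow in *; split; nra.
Qed.

Lemma sum_pow_bounds (p N : nat) :
  INR (S N) ^ S p <= INR (S p) * sum_f_R0 (fun k => INR (S k) ^ p) N <= INR (S (S N)) ^ S p.
Proof.
  induction N as [|N [IHl IHu]].
  - pose proof (pow_succ_diff_bounds 1 p ltac:(lra)) as [Hl _].
    simpl sum_f_R0; change (INR 1) with 1; change (INR 2) with (1 + 1).
    rewrite !pow1 in *; rewrite S_INR in *; pose proof (pos_INR p); lra.
  - pose proof (pow_succ_diff_bounds (INR (S N)) p (pos_INR _)) as [_ Hu].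
    pose proof (pow_succ_diff_bounds (INR (S (S N))) p (pos_INR _)) as [Hl _].
    rewrite <- !S_INR in Hu, Hl; rewrite tech5; lra.
Qed.

Lemma Un_cv_inv_INR_S : Un_cv (fun N => / INR (S N)) 0.
Proof.
  apply (Un_cv_ext (fun N => pos (RinvN N))); [|exact RinvN_cv].
  intro N; cbv [RinvN pos]; now rewrite <- S_INR.
Qed.

Lemma Un_cv_sum_pow_ratio (p : nat) :
  Un_cv (fun N => INR (S p) * sum_f_R0 (fun k => INR (S k) ^ p) N / INR (S N) ^ S p) 1.
Proof.
  apply (Un_cv_squeeze (fun _ => 1) _ (fun N => (1 + / INR (S N)) ^ S p)).
  - intro N; destruct (sum_pow_bounds p N) as [Hl Hu]; set (X := INR (S N) ^ S p) in *.
    assert (HX : 0 < X) by (apply pow_lt, lt_0_INR; lia).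
    replace (INR (S (S N)) ^ S p) with (X * (1 + / INR (S N)) ^ S p) in Hu.
    2:{ unfold X; rewrite <- Rpow_mult_distr; f_equal.
        rewrite (S_INR (S N)); field; apply not_0_INR; lia. }
    apply (Rmult_le_compat_r (/ X)) in Hl, Hu; try (left; now apply Rinv_0_lt_compat).
    rewrite Rinv_r in Hl by lra.
    replace (X * (1 + / INR (S N)) ^ S p * / X) with ((1 + / INR (S N)) ^ S p) in Hu
      by (field; lra).
    split; assumption.
  - apply Un_cv_const.
  - pose proof (continuity_seq (fun x => x ^ S p) _ _ ltac:(reg)
                  (CV_plus _ _ _ _ (Un_cv_const 1) Un_cv_inv_INR_S)) as Hlim.
    now rewrite Rplus_0_r, pow1 in Hlim.
Qed.

Lemma Un_cv_partial_sums_pow (a : nat -> R) (p : nat) (v : R) :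
  Un_cv (fun N => a (S N) / INR (S N) ^ p) v ->
  Un_cv (fun N => sum_f_R0 a (S N) / INR (S N) ^ S p) (v / INR (S p)).
Proof.
  intro Ha.
  set (P N := sum_f_R0 (fun k => INR (S k) ^ p) N).
  assert (Hpow_ge1 : forall k q, 1 <= INR (S k) ^ q).
  { intros k q; apply pow_R1_Rle; rewrite S_INR; pose proof (pos_INR k); lra. }
  assert (HP : forall N, INR (S N) <= P N).
  { induction N as [|N IH]; unfold P in *.
    - cbn [sum_f_R0]; specialize (Hpow_ge1 0%nat p); change (INR 1) with 1 in *; lra.
    - rewrite tech5; specialize (Hpow_ge1 (S N) p); rewrite (S_INR (S N)) in *; lra. }
  assert (Hcesaro : Un_cv (fun N => sum_f_R0 (fun k => a (S k)) N / P N) v).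
  { apply (Un_cv_ext
      (fun N => sum_f_R0 (fun k => INR (S k) ^ p * (a (S k) / INR (S k) ^ p)) N / P N)).
    - intro N; f_equal; apply sum_eq; intros k _.
      field; apply pow_nonzero, not_0_INR; lia.
    - apply Cesaro; [exact Ha| |].
      + intro k; specialize (Hpow_ge1 k p); lra.
      + apply cv_infty_ge_INR; intro N; pose proof (HP N); rewrite S_INR in *; unfold P in *; lra. }
  assert (Hvanish : Un_cv (fun N => / INR (S N) ^ S p) 0).
  { apply cv_infty_cv_0, cv_infty_ge_INR; intro N.
    apply (Rle_trans _ (INR (S N))); [apply le_INR; lia|].
    rewrite <- (pow_1 (INR (S N))) at 1; apply Rle_pow; [|lia].
    rewrite S_INR; pose proof (pos_INR N); lra. }
  pose proof (CV_plus _ _ _ _ (CV_mult _ _ _ _ (Un_cv_const (a 0%nat)) Hvanish)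
                (CV_mult _ _ _ _ (CV_mult _ _ _ _ Hcesaro (Un_cv_sum_pow_ratio p))
                   (Un_cv_const (/ INR (S p))))) as Hlim.
  replace (v / INR (S p)) with (a 0%nat * 0 + v * 1 * / INR (S p)) by (unfold Rdiv; ring).
  refine (Un_cv_ext _ _ _ _ Hlim); intro N; cbv beta.
  assert (HPN : 0 < P N) by (pose proof (HP N); pose proof (lt_0_INR (S N) ltac:(lia)); lra).
  assert (HX : INR (S N) ^ S p <> 0) by (apply pow_nonzero, not_0_INR; lia).
  assert (Hp : INR (S p) <> 0) by (apply not_0_INR; lia).
  rewrite (decomp_sum a (S N)) by lia; simpl pred.
  fold (P N); field; repeat split; auto; lra.
Qed.

Lemma INR_sum_nat_f_O (f : nat -> nat) (M : nat) :
  INR (sum_nat_f_O f M) = sum_f_R0 (fun m => INR (f m)) M.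
Proof.
  induction M as [|M IH]; [reflexivity|].
  simpl sum_nat_f_O; rewrite plus_INR, IH; reflexivity.
Qed.

Open Scope nat_scope.

(** * Adjoining a minimum below a disjoint union of posets *)

Definition bottom_union_lt (n1 : nat) (lt1 lt2 : nat -> nat -> Prop) (i j : nat) : Prop :=
  (i = n1 /\ j <> n1) \/
  (i < n1 /\ j < n1 /\ lt1 i j) \/
  (n1 < i /\ n1 < j /\ lt2 (i - S n1) (j - S n1)).

Lemma nth_app_cons_shift {A : Type} (x1 x2 : list A) (m d : A) (k : nat) :
  nth (length x1 + S k) (x1 ++ m :: x2) d = nth k x2 d.
Proof. rewrite app_nth2 by lia; now replace (length x1 + S k - length x1) with (S k) by lia. Qed.

Lemma order_points_bottom_union n1 n2 lt1 lt2 M x1 m x2 :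
  length x1 = n1 -> length x2 = n2 ->
  order_points (n1 + S n2) (bottom_union_lt n1 lt1 lt2) M (x1 ++ m :: x2) <->
  m <= M /\ order_points n1 lt1 m x1 /\ order_points n2 lt2 m x2.
Proof.
  intros <- <-; unfold order_points.
  rewrite Forall_app, Forall_cons_iff, length_app; cbn [length].
  assert (Hl : forall i, i < length x1 -> nth i (x1 ++ m :: x2) 0 = nth i x1 0)
    by (intros; now apply app_nth1).
  assert (Hroot : nth (length x1) (x1 ++ m :: x2) 0 = m) by apply nth_middle.
  assert (Hshift : forall i, length x1 < i ->
            nth i (x1 ++ m :: x2) 0 = nth (i - S (length x1)) x2 0).
  { intros i Hi; replace i with (length x1 + S (i - S (length x1))) at 1 by lia.
    apply nth_app_cons_shift. }
  split.
  - intros [_ [[_ [HmM _]] Hord]].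
    assert (Hbelow : forall i, i < length x1 + S (length x2) -> i <> length x1 ->
              nth i (x1 ++ m :: x2) 0 <= m).
    { intros i Hi Hne; pose proof (Hord (length x1) i ltac:(lia) Hi ltac:(left; auto)) as H.
      now rewrite Hroot in H. }
    split; [exact HmM|split; (split; [reflexivity|split])].
    + apply Forall_nth; intros i d Hi; rewrite nth_indep with (d' := 0) by exact Hi.
      rewrite <- Hl by exact Hi; apply Hbelow; lia.
    + intros i j Hi Hj Hij; rewrite <- !Hl by assumption.
      apply Hord; [lia|lia|right; left; auto].
    + apply Forall_nth; intros k d Hk; rewrite nth_indep with (d' := 0) by exact Hk.
      rewrite <- nth_app_cons_shift with (x1 := x1) (m := m); apply Hbelow; lia.
    + intros i j Hi Hj Hij.
      rewrite <- (nth_app_cons_shift x1 x2 m 0 i), <- (nth_app_cons_shift x1 x2 m 0 j).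
      apply Hord; [lia|lia|right; right].
      replace (length x1 + S i - S (length x1)) with i by lia.
      replace (length x1 + S j - S (length x1)) with j by lia; split; [lia|split; [lia|exact Hij]].
  - intros [HmM [[_ [Hx1 Hord1]] [_ [Hx2 Hord2]]]].
    split; [lia|split].
    { split; [|split; [exact HmM|]]; (eapply Forall_impl; [|eassumption]; cbv beta; lia). }
    rewrite Forall_nth in Hx1, Hx2.
    intros i j Hi Hj [[-> Hj']|[[Hi' [Hj' Hij]]|[Hi' [Hj' Hij]]]].
    + rewrite Hroot; destruct (Nat.lt_ge_cases j (length x1)) as [Hjl|Hjg].
      * rewrite Hl by exact Hjl; apply Hx1, Hjl.
      * rewrite Hshift by lia; apply Hx2; lia.
    + rewrite !Hl by assumption; apply Hord1; assumption.
    + rewrite !Hshift by assumption; apply Hord2; [lia|lia|exact Hij].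
Qed.

Lemma order_points_bottom_union_iff n1 n2 lt1 lt2 M x :
  order_points (n1 + S n2) (bottom_union_lt n1 lt1 lt2) M x <->
  exists m x1 x2, x = x1 ++ m :: x2 /\ m <= M /\
    order_points n1 lt1 m x1 /\ order_points n2 lt2 m x2.
Proof.
  split.
  - intro Hx.
    assert (Hlen : length (skipn n1 x) = S n2) by (rewrite length_skipn, (proj1 Hx); lia).
    destruct (skipn n1 x) as [|m x2] eqn:Hskip; [discriminate|].
    assert (Hsplit : x = firstn n1 x ++ m :: x2)
      by (rewrite <- Hskip; symmetry; apply firstn_skipn).
    assert (Hlen1 : length (firstn n1 x) = n1) by (rewrite length_firstn, (proj1 Hx); lia).
    rewrite Hsplit, order_points_bottom_union in Hx by (simpl in Hlen; lia).
    exists m, (firstn n1 x), x2; tauto.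
  - intros [m [x1 [x2 [-> [HmM [H1 H2]]]]]].
    apply order_points_bottom_union; [apply H1|apply H2|tauto].
Qed.

Open Scope R_scope.

Lemma order_volume_bottom_union n1 n2 lt1 lt2 v1 v2 :
  order_volume n1 lt1 v1 -> order_volume n2 lt2 v2 ->
  order_volume (n1 + S n2) (bottom_union_lt n1 lt1 lt2) (v1 * v2 / INR (n1 + S n2)).
Proof.
  intros [c1 [Hc1 Hv1]] [c2 [Hc2 Hv2]].
  exists (sum_nat_f_O (fun m => (c1 m * c2 m)%nat)); split.
  - intro M; eapply is_card_ext; [intro x; symmetry; apply order_points_bottom_union_iff|].
    apply (is_card_glue_upto _ _ n1); [|exact Hc1|exact Hc2].
    intros m x Hx; apply Hx.
  - rewrite Nat.add_succ_r.
    refine (Un_cv_ext _ _ _ _ (Un_cv_partial_sums_pow (fun m => INR (c1 m * c2 m)) _ _ _)).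
    + intro N; now rewrite INR_sum_nat_f_O.
    + refine (Un_cv_ext _ _ _ _ (CV_mult _ _ _ _ Hv1 Hv2)); intro N.
      assert (Hpos : forall k, INR (S N) ^ k <> 0) by (intro; apply pow_nonzero, not_0_INR; lia).
      rewrite mult_INR, pow_add; field; split; apply Hpos.
Qed.

Lemma poset_fact_bottom_union n1 n2 lt1 lt2 f1 f2 :
  poset_fact n1 lt1 f1 -> poset_fact n2 lt2 f2 ->
  poset_fact (n1 + S n2) (bottom_union_lt n1 lt1 lt2) (INR (n1 + S n2) * f1 * f2).
Proof.
  intros [v1 [Hv1 [Hnz1 ->]]] [v2 [Hv2 [Hnz2 ->]]].
  assert (Hn : INR (n1 + S n2) <> 0) by (apply not_0_INR; lia).
  exists (v1 * v2 / INR (n1 + S n2)); split; [now apply order_volume_bottom_union|split].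
  - unfold Rdiv; repeat apply Rmult_integral_contrapositive_currified; auto.
    now apply Rinv_neq_0_compat.
  - field; auto.
Qed.

Lemma order_points_ext n lt lt' M x :
  (forall i j, (i < n)%nat -> (j < n)%nat -> lt i j <-> lt' i j) ->
  order_points n lt M x -> order_points n lt' M x.
Proof.
  intros Hlt [Hlen [Hbound Hord]]; repeat split; auto.
  intros i j Hi Hj Hij; apply Hord; auto; now apply Hlt.
Qed.

Lemma poset_fact_ext n lt lt' f :
  (forall i j, (i < n)%nat -> (j < n)%nat -> lt i j <-> lt' i j) ->
  poset_fact n lt f -> poset_fact n lt' f.
Proof.
  intros Hlt [v [[c [Hc Hv]] Hf]]; exists v; split; [exists c; split|exact Hf]; [|exact Hv].
  intro M; apply (is_card_ext _ _ _ (fun x => conj (order_points_ext _ _ _ M x Hlt)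
    (order_points_ext _ _ _ M x (fun i j Hi Hj => iff_sym (Hlt i j Hi Hj)))) (Hc M)).
Qed.

Lemma poset_fact_empty (lt : nat -> nat -> Prop) : poset_fact 0 lt 1.
Proof.
  exists 1; split; [|split; [lra|field]].
  exists (fun _ => 1%nat); split.
  - intro M; exists [[]]; split; [repeat constructor; simpl; tauto|split; [|reflexivity]].
    intro x; split.
    + intros [<-|[]]; repeat split; [constructor|intros; lia].
    + intros [Hlen _]; apply length_zero_iff_nil in Hlen as ->; now left.
  - refine (Un_cv_ext _ _ _ _ (Un_cv_const 1)); intro N; simpl; field.
Qed.

Open Scope nat_scope.

(** * Grafting a tree to the right of a forest *)

Lemma clos_trans_map {A B : Type} (RA : relation A) (RB : relation B) (f : A -> B) (x y : A) :
  (forall a b, RA a b -> RB (f a) (f b)) -> clos_trans A RA x y -> clos_trans B RB (f x) (f y).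
Proof.
  intros Hf Hxy; induction Hxy as [a b Hab|a b c _ IH1 _ IH2]; [now apply t_step, Hf|].
  eapply t_trans; eauto.
Qed.

Lemma Rrel_cons (c : nat) (v w : list nat) : Rrel v w -> Rrel (c :: v) (c :: w).
Proof.
  intros [[u [Hu ->]]|[p [a [b [-> [-> Hab]]]]]].
  - left; exists u; auto.
  - right; exists (c :: p), a, b; auto.
Qed.

Lemma Rrel_cons_inv (j k : nat) (v w : list nat) :
  Rrel (j :: v) (k :: w) -> (j = k /\ Rrel v w) \/ (v = [] /\ w = [] /\ k < j).
Proof.
  intros [[u [Hu Hw]]|[[|h p] [a [b [Hv [Hw Hab]]]]]]; simpl in *.
  - injection Hw as -> ->; left; split; [reflexivity|left; eauto].
  - injection Hv as -> ->; injection Hw as -> ->; right; auto.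
  - injection Hv as -> ->; injection Hw as -> ->.
    left; split; [reflexivity|right; exists p, a, b; auto].
Qed.

Lemma Rrel_nil_r (v : list nat) : ~ Rrel v [].
Proof.
  intros [[u [Hu Hw]]|[p [a [b [_ [Hw _]]]]]].
  - destruct v, u; discriminate + contradiction.
  - destruct p; discriminate.
Qed.

Lemma llrel_in (s : list ptree) (v w : list nat) :
  llrel s v w -> In v (fverts s) /\ In w (fverts s).
Proof. induction 1 as [x y Hxy|x y z _ [Hx _] _ [_ Hz]]; tauto. Qed.

Lemma in_fvaux (i : nat) (l : list ptree) (v : list nat) :
  In v (fvaux i l) -> exists j u, v = j :: u /\ i <= j < i + length l.
Proof.
  revert i; induction l as [|t l IH]; intros i Hv; simpl in Hv; [contradiction|].
  apply in_app_or in Hv as [Hv|Hv].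
  - apply in_map_iff in Hv as [u [<- _]]; exists i, u; simpl; split; [reflexivity|lia].
  - destruct (IH _ Hv) as [j [u [-> Hj]]]; exists j, u; simpl; split; [reflexivity|lia].
Qed.

Lemma nil_notin_fverts (s : list ptree) : ~ In [] (fverts s).
Proof. intro H; destruct (in_fvaux _ _ _ H) as [j [u [Hu _]]]; discriminate. Qed.

Lemma fverts_head_lt (s : list ptree) (j : nat) (u : list nat) :
  In (j :: u) (fverts s) -> j < length s.
Proof. intro H; destruct (in_fvaux _ _ _ H) as [j' [u' [Hu Hj]]]; injection Hu as -> ->; lia. Qed.

Lemma length_notin_fverts (s : list ptree) (u : list nat) : ~ In (length s :: u) (fverts s).
Proof. intro H; apply fverts_head_lt in H; lia. Qed.

Lemma root_in_fvaux (i : nat) (l : list ptree) (j : nat) :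
  j < length l -> In [i + j] (fvaux i l).
Proof.
  revert i j; induction l as [|[ts] l IH]; intros i j Hj; cbn [fvaux length] in *; [lia|].
  apply in_or_app; destruct j as [|j].
  - left; rewrite Nat.add_0_r; now left.
  - right; replace (i + S j) with (S i + j) by lia; apply IH; lia.
Qed.

Lemma fvaux_snoc (i : nat) (l : list ptree) (t : ptree) :
  fvaux i (l ++ [t]) = fvaux i l ++ map (cons (i + length l)) (tvert t).
Proof.
  revert i; induction l as [|a l IH]; intro i; simpl.
  - now rewrite Nat.add_0_r, app_nil_r.
  - rewrite IH, app_assoc; do 3 f_equal; lia.
Qed.

Section Snoc.

Variables s ts : list ptree.

Local Notation sigma := (s ++ [Node ts]).
Local Notation c := (length s).

Lemma fverts_snoc : fverts sigma = fverts s ++ [c] :: map (cons c) (fverts ts).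
Proof. unfold fverts; now rewrite fvaux_snoc. Qed.

Lemma fsize_snoc : fsize sigma = fsize s + S (fsize ts).
Proof. unfold fsize; rewrite fverts_snoc, length_app; simpl; now rewrite length_map. Qed.

Lemma in_fverts_snoc (v : list nat) :
  In v (fverts sigma) <->
  In v (fverts s) \/ v = [c] \/ exists u, v = c :: u /\ In u (fverts ts).
Proof.
  rewrite fverts_snoc, in_app_iff; simpl; rewrite in_map_iff.
  split; intros [H|[H|[u [Hu Hin]]]]; auto; right; right; eauto.
Qed.

Lemma llrel_snoc_l (v w : list nat) : llrel s v w -> llrel sigma v w.
Proof.
  apply (clos_trans_map _ _ (fun x => x) v w); intros a b [Ha [Hb Hab]].
  repeat split; auto; apply in_fverts_snoc; now left.
Qed.

Lemma llrel_snoc_r (u u' : list nat) : llrel ts u u' -> llrel sigma (c :: u) (c :: u').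
Proof.
  apply (clos_trans_map _ _ (cons c) u u'); intros a b [Ha [Hb Hab]].
  repeat split; [apply in_fverts_snoc; eauto 6..|now apply Rrel_cons].
Qed.

Lemma llrel_snoc_root (w : list nat) : In w (fverts sigma) -> w <> [c] -> llrel sigma [c] w.
Proof.
  intros Hw Hne.
  assert (Hroot : In [c] (fverts sigma)) by (apply in_fverts_snoc; auto).
  pose proof Hw as Hw'; apply in_fverts_snoc in Hw' as [Hs|[->|[u [-> Hu]]]]; [|contradiction|].
  - destruct (in_fvaux _ _ _ Hs) as [j [u [-> Hj]]].
    assert (Hj_root : In [j] (fverts sigma)).
    { apply in_fverts_snoc; left; apply (root_in_fvaux 0); lia. }
    assert (Hsib : llrel sigma [c] [j]).
    { apply t_step; repeat split; auto; right; exists [], c, j; simpl in *; repeat split; lia. }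
    destruct u as [|k u]; [exact Hsib|].
    eapply t_trans; [exact Hsib|]; apply t_step; repeat split; auto.
    left; exists (k :: u); split; [discriminate|reflexivity].
  - apply t_step; repeat split; auto.
    left; exists u; split; [intros ->; exact (nil_notin_fverts _ Hu)|reflexivity].
Qed.

Lemma snoc_step_inv (y w : list nat) :
  In y (fverts sigma) -> In w (fverts sigma) -> Rrel y w ->
  w <> [c] /\
  (y = [c] \/ (In y (fverts s) /\ In w (fverts s)) \/
   exists u u', y = c :: u /\ w = c :: u' /\
     In u (fverts ts) /\ In u' (fverts ts) /\ Rrel u u').
Proof.
  intros Hy Hw Hyw.
  assert (Hwc : w <> [c]).
  { intros ->; destruct y as [|j u]; [now apply nil_notin_fverts in Hy|].
    apply fverts_head_lt in Hy; rewrite length_app in Hy; simpl in Hy.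
    apply Rrel_cons_inv in Hyw as [[_ Hu]|[_ [_ Hcj]]]; [exact (Rrel_nil_r _ Hu)|lia]. }
  split; [exact Hwc|].
  apply in_fverts_snoc in Hy as [Hy|[->|[u [-> Hu]]]]; [|now left|];
    apply in_fverts_snoc in Hw as [Hw|[->|[u' [-> Hu']]]]; try contradiction; auto.
  - destruct y as [|j u]; [now apply nil_notin_fverts in Hy|].
    apply fverts_head_lt in Hy; apply Rrel_cons_inv in Hyw as [[Hjc _]|[_ [_ Hcj]]]; lia.
  - destruct w as [|k w]; [now apply nil_notin_fverts in Hw|].
    apply fverts_head_lt in Hw; apply Rrel_cons_inv in Hyw as [[Hck _]|[Hnil _]]; [lia|].
    subst u; now apply nil_notin_fverts in Hu.
  - apply Rrel_cons_inv in Hyw as [[_ Hyw]|[_ [_ Hcc]]]; [|lia].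
    right; right; exists u, u'; repeat split; auto.
Qed.

Lemma llrel_snoc_inv (v w : list nat) :
  llrel sigma v w ->
  (v = [c] /\ w <> [c]) \/ llrel s v w \/
  exists u u', v = c :: u /\ w = c :: u' /\ llrel ts u u'.
Proof.
  intro Hvw; apply clos_trans_tn1 in Hvw.
  induction Hvw as [w [Hv [Hw Hvw]]|y w [Hy [Hw Hyw]] Hvy IH].
  - destruct (snoc_step_inv _ _ Hv Hw Hvw)
      as [Hwc [->|[[Hvs Hws]|[u [u' [-> [-> [Hu [Hu' Huu']]]]]]]]].
    + now left.
    + right; left; now apply t_step.
    + right; right; exists u, u'; repeat split; now apply t_step.
  - destruct (snoc_step_inv _ _ Hy Hw Hyw)
      as [Hwc [->|[[Hys Hws]|[u [u' [-> [-> [Hu [Hu' Huu']]]]]]]]];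
      destruct IH as [[-> _]|[Hvy_s|[u0 [u0' [-> [Hy_eq Hu0]]]]]]; auto.
    + now apply llrel_in, proj2, length_notin_fverts in Hvy_s.
    + injection Hy_eq as <-; now apply llrel_in, proj2, nil_notin_fverts in Hu0.
    + right; left; eapply t_trans; [exact Hvy_s|now apply t_step].
    + rewrite Hy_eq in Hys; now apply length_notin_fverts in Hys.
    + now apply llrel_in, proj2, length_notin_fverts in Hvy_s.
    + injection Hy_eq as ->; right; right; exists u0, u'; repeat split.
      eapply t_trans; [exact Hu0|now apply t_step].
Qed.

Lemma nth_fverts_snoc_cases (i : nat) :
  i < fsize sigma ->
  (i < fsize s /\ nth i (fverts sigma) [] = nth i (fverts s) [] /\
     In (nth i (fverts s) []) (fverts s)) \/
  (i = fsize s /\ nth i (fverts sigma) [] = [c]) \/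
  (exists k, i = fsize s + S k /\ nth i (fverts sigma) [] = c :: nth k (fverts ts) [] /\
     In (nth k (fverts ts) []) (fverts ts)).
Proof.
  rewrite fsize_snoc; intro Hi; rewrite fverts_snoc.
  destruct (Nat.lt_trichotomy i (fsize s)) as [Hlt|[->|Hgt]].
  - left; split; [exact Hlt|split; [now apply app_nth1|now apply nth_In]].
  - right; left; split; [reflexivity|apply nth_middle].
  - unfold fsize in *; set (k := i - S (length (fverts s))).
    assert (Hk : k < length (fverts ts)) by lia.
    right; right; exists k; split; [lia|split; [|now apply nth_In]].
    replace i with (length (fverts s) + S k) by lia.
    rewrite nth_app_cons_shift, nth_indep with (d' := c :: []) by now rewrite length_map.
    apply map_nth.
Qed.

Lemma nth_fverts_snoc_root : nth (fsize s) (fverts sigma) [] = [c].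
Proof. rewrite fverts_snoc; apply nth_middle. Qed.

Lemma nth_fverts_snoc_root_inv (i : nat) :
  i < fsize sigma -> nth i (fverts sigma) [] = [c] -> i = fsize s.
Proof.
  intros Hi Hroot;
    destruct (nth_fverts_snoc_cases i Hi) as [[_ [Hv Hin]]|[[-> _]|[k [_ [Hv Hin]]]]];
    [|reflexivity|]; rewrite Hroot in Hv.
  - rewrite <- Hv in Hin; now apply length_notin_fverts in Hin.
  - injection Hv as Hv; rewrite <- Hv in Hin; now apply nil_notin_fverts in Hin.
Qed.

Lemma nth_fverts_snoc_l_inv (i : nat) :
  i < fsize sigma -> In (nth i (fverts sigma) []) (fverts s) ->
  i < fsize s /\ nth i (fverts sigma) [] = nth i (fverts s) [].
Proof.
  intros Hi Hin; destruct (nth_fverts_snoc_cases i Hi) as [[Hlt [Hv _]]|[[_ Hv]|[k [_ [Hv _]]]]];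
    [auto| |]; rewrite Hv in Hin; now apply length_notin_fverts in Hin.
Qed.

Lemma nth_fverts_snoc_r_inv (i : nat) (u : list nat) :
  i < fsize sigma -> nth i (fverts sigma) [] = c :: u -> In u (fverts ts) ->
  exists k, i = fsize s + S k /\ u = nth k (fverts ts) [].
Proof.
  intros Hi Hv Hu;
    destruct (nth_fverts_snoc_cases i Hi) as [[_ [Hv' Hin]]|[[_ Hv']|[k [-> [Hv' _]]]]];
    rewrite Hv in Hv'.
  - rewrite <- Hv' in Hin; now apply length_notin_fverts in Hin.
  - injection Hv' as ->; now apply nil_notin_fverts in Hu.
  - injection Hv' as ->; eauto.
Qed.

Lemma forest_lt_snoc (i j : nat) :
  i < fsize sigma -> j < fsize sigma ->
  forest_lt sigma i j <-> bottom_union_lt (fsize s) (forest_lt s) (forest_lt ts) i j.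
Proof.
  intros Hi Hj; unfold forest_lt; split.
  - intro Hij; apply llrel_snoc_inv in Hij as [[Hvi Hvj]|[Hs|[u [u' [Hvi [Hvj Hts]]]]]].
    + left; split; [now apply nth_fverts_snoc_root_inv|].
      intros ->; apply Hvj, nth_fverts_snoc_root.
    + destruct (llrel_in _ _ _ Hs) as [Hvi Hvj].
      apply nth_fverts_snoc_l_inv in Hvi as [Hi' Hvi]; [|exact Hi].
      apply nth_fverts_snoc_l_inv in Hvj as [Hj' Hvj]; [|exact Hj].
      right; left; rewrite Hvi, Hvj in Hs; auto.
    + destruct (llrel_in _ _ _ Hts) as [Hu Hu'].
      destruct (nth_fverts_snoc_r_inv i u Hi Hvi Hu) as [k [-> ->]].
      destruct (nth_fverts_snoc_r_inv j u' Hj Hvj Hu') as [k' [-> ->]].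
      right; right; split; [lia|split; [lia|]].
      now replace (fsize s + S k - S (fsize s)) with k by lia;
        replace (fsize s + S k' - S (fsize s)) with k' by lia.
  - intros [[-> Hj']|[[Hi' [Hj' Hij]]|[Hi' [Hj' Hij]]]].
    + rewrite nth_fverts_snoc_root; apply llrel_snoc_root; [apply nth_In; exact Hj|].
      intro Hroot; exact (Hj' (nth_fverts_snoc_root_inv j Hj Hroot)).
    + destruct (nth_fverts_snoc_cases _ Hi) as [[_ [-> _]]|[[? _]|[k [? _]]]]; [|lia|lia].
      destruct (nth_fverts_snoc_cases _ Hj) as [[_ [-> _]]|[[? _]|[k [? _]]]]; [|lia|lia].
      now apply llrel_snoc_l.
    + destruct (nth_fverts_snoc_cases _ Hi) as [[? _]|[[? _]|[k [-> [-> _]]]]]; [lia|lia|].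
      destruct (nth_fverts_snoc_cases _ Hj) as [[? _]|[[? _]|[k' [-> [-> _]]]]]; [lia|lia|].
      apply llrel_snoc_r.
      now replace (fsize s + S k - S (fsize s)) with k in Hij by lia;
        replace (fsize s + S k' - S (fsize s)) with k' in Hij by lia.
Qed.

Lemma planar_fact_snoc (f1 f2 : R) :
  planar_fact s f1 -> planar_fact ts f2 ->
  planar_fact sigma (INR (fsize sigma) * f1 * f2).
Proof.
  intros Hf1 Hf2; unfold planar_fact.
  apply (poset_fact_ext _ (bottom_union_lt (fsize s) (forest_lt s) (forest_lt ts))).
  - intros i j Hi Hj; symmetry; now apply forest_lt_snoc.
  - rewrite fsize_snoc; now apply poset_fact_bottom_union.
Qed.

End Snoc.

Open Scope R_scope.

Definition prefix_sizes_prod (sigma : list ptree) : R :=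
  fold_right Rmult 1 (map (fun j => INR (fsize (firstn (S j) sigma))) (seq 0 (length sigma))).

Lemma prod_snoc (l : list R) (x : R) : fold_right Rmult 1 (l ++ [x]) = fold_right Rmult 1 l * x.
Proof. induction l as [|y l IH]; simpl; [ring|rewrite IH; ring]. Qed.

Lemma prefix_sizes_prod_snoc (sigma : list ptree) (t : ptree) :
  prefix_sizes_prod (sigma ++ [t]) = prefix_sizes_prod sigma * INR (fsize (sigma ++ [t])).
Proof.
  unfold prefix_sizes_prod; rewrite length_app, Nat.add_1_r, seq_S, map_app; cbn [map plus].
  rewrite prod_snoc.
  rewrite firstn_all2 by (rewrite length_app; simpl; lia); f_equal.
  apply f_equal, map_ext_in; intros j Hj; apply in_seq in Hj.
  rewrite firstn_app; replace (S j - length sigma)%nat with 0%nat by lia.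
  now rewrite app_nil_r.
Qed.

Theorem mainTheorem9 (taus : list (list ptree)) (fs : list R) :
  length fs = length taus ->
  (forall j, (j < length taus)%nat -> planar_fact (nth j taus nil) (nth j fs 0)) ->
  planar_fact (map Node taus)
    (fold_right Rmult 1
       (map (fun j => INR (fsize (firstn (S j) (map Node taus))))
            (seq 0 (length taus)))
     * fold_right Rmult 1 fs).
Proof.
  replace (seq 0 (length taus)) with (seq 0 (length (map Node taus))) by now rewrite length_map.
  fold (prefix_sizes_prod (map Node taus)); revert fs.
  induction taus as [|t taus IH] using rev_ind; intros fs Hlen Hf.
  - destruct fs; [|discriminate]; simpl; rewrite Rmult_1_l; apply poset_fact_empty.
  - destruct (exists_last (l := fs)) as [fs' [f ->]];
      [intros ->; rewrite length_app in Hlen; simpl in Hlen; lia|].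
    rewrite !length_app in Hlen; simpl in Hlen.
    assert (Hf' : forall j, (j < length taus)%nat -> planar_fact (nth j taus []) (nth j fs' 0)).
    { intros j Hj; specialize (Hf j ltac:(rewrite length_app; simpl; lia)).
      now rewrite !app_nth1 in Hf by lia. }
    specialize (Hf (length taus) ltac:(rewrite length_app; simpl; lia)).
    rewrite nth_middle in Hf; replace (length taus) with (length fs') in Hf by lia.
    rewrite nth_middle in Hf.
    rewrite map_app; cbn [map]; rewrite prefix_sizes_prod_snoc, prod_snoc.
    replace (prefix_sizes_prod (map Node taus) * INR (fsize (map Node taus ++ [Node t])) *
               (fold_right Rmult 1 fs' * f))
      with (INR (fsize (map Node taus ++ [Node t])) *
              (prefix_sizes_prod (map Node taus) * fold_right Rmult 1 fs') * f) by ring.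
    apply planar_fact_snoc; [apply IH|exact Hf]; [lia|exact Hf'].
Qed.
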